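(* In the iPALM setting described in the context, let $\varepsilon\in(0,1)$, $\beta_0,\rho_0>0$, $\sigma>1$, and choose $\beta_k=\beta_0\sigma^k$, $\rho_k=\rho_0\sigma^{-k}$, $\bar\varepsilon_k=\min\{\bar\varepsilon,\sqrt{\rho_0/(20\sigma)}\,\sigma^{-k}\}$ with $\bar\varepsilon=\frac{\varepsilon(\sigma-1)}{8(\sigma+1)}\min\{1,\sqrt{\beta_0\rho_0}\}$. Let $D_0=\sqrt{\beta_0\rho_0\|x^{(0)}-x^*\|^2+\|\lambda^{(0)}-\lambda^*\|^2}$, let $K\ge1$ be an integer, and set $B_x=\frac{2\bar\varepsilon(\sigma^K-1)}{\rho_0(\sigma-1)}+\frac{D_0}{\sqrt{\beta_0\rho_0}}$ and $B_\lambda=\frac{2\bar\varepsilon\sqrt{\beta_0}(\sigma^K-1)}{\sqrt{\rho_0}(\sigma-1)}+D_0$. Then $\|x^{(k)}-x^*\|\le B_x$ and $\|\lambda^{(k)}-\lambda^*\|\le B_\lambda$ for all $0\le k\le K$, and $\|x_*^{(k+1)}-x^*\|\le B_x$ for all $0\le k<K$, where $x_*^{(k+1)}=\arg\min_x\Psi_k(x)$.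
   Context: iPALM setting. Consider $\min_x G(x):=f(x)+r(x)$ subject to $A_Ex=b_E$, $A_Ix\le b_I$, where $f:\mathbb R^n\to\mathbb R$ is convex, differentiable with $L_f$-Lipschitz gradient and $\mu$-strongly convex ($\mu\ge0$), and $r$ is proper closed convex. Write $A=[A_E;A_I]$, $b=[b_E;b_I]$, and multipliers $\lambda=[\lambda_E;\lambda_I]$. Assume $(x^*,\lambda^* )$ satisfies the KKT conditions $0\in\partial G(x^* )+A^\top\lambda^*$, $A_Ex^*=b_E$, $A_Ix^*\le b_I$, $\lambda_I^*\ge0$, $\langle\lambda_I^*,A_Ix^*-b_I\rangle=0$. The augmented Lagrangian is $\mathcal L_\beta(x,\lambda)=G(x)+\langle\lambda_E,A_Ex-b_E\rangle+\frac\beta2\|A_Ex-b_E\|^2+\frac1{2\beta}\big(\|[\beta(A_Ix-b_I)+\lambda_I]_+\|^2-\|\lambda_I\|^2\big)$, with $[\cdot]_+$ the componentwise positive part. Given $x^{(0)}\in\mathrm{dom}(G)$, $\lambda^{(0)}$, and positive numbers $\beta_k,\rho_k$ and $\bar\varepsilon_k\ge0$, the iPALM iterates satisfy for each $k\ge0$: with $\Psi_k(x)=\mathcal L_{\beta_k}(x,\lambda^{(k)})+\frac{\rho_k}2\|x-x^{(k)}\|^2$, the point $x^{(k+1)}$ is any point with $\mathrm{dist}(0,\partial\Psi_k(x^{(k+1)}))\le\bar\varepsilon_k$, and $\lambda_E^{(k+1)}=\lambda_E^{(k)}+\beta_k(A_Ex^{(k+1)}-b_E)$, $\lambda_I^{(k+1)}=[\lambda_I^{(k)}+\beta_k(A_Ix^{(k+1)}-b_I)]_+$.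 $\partial$ is the convex subdifferential and $\mathrm{dist}(0,S)=\inf_{s\in S}\|s\|$. *)

(* Vectors of R^n are column vectors
   'cV[R]_n over an abstract R : realType; the Euclidean inner product and
   norm are defined explicitly below (the library's matrix norm is the
   max-norm, not the Euclidean one). *)
From mathcomp Require Import all_boot all_order all_algebra.
From mathcomp Require Import all_classical all_reals all_analysis.
Set Implicit Arguments. Unset Strict Implicit. Unset Printing Implicit Defensive.
Import Order.TTheory GRing.Theory Num.Theory.
Import numFieldNormedType.Exports.
Local Open Scope ring_scope.

Section Defs.
Variable R : realType.

Definition dotv (m : nat) (u v : 'cV[R]_m) : R := \sum_(i < m) u i 0 * v i 0.
Definition sqn (m : nat) (u : 'cV[R]_m) : R := dotv u u.
Definition enorm (m : nat) (u : 'cV[R]_m) : R := Num.sqrt (sqn u).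

Definition pospart (m : nat) (u : 'cV[R]_m) : 'cV[R]_m :=
  map_mx (fun t => Num.max t 0) u.

Definition has_gradient (n : nat) (f : 'cV[R]_n -> R) (gf : 'cV[R]_n -> 'cV[R]_n) :=
  forall x, differentiable f x /\ forall v, 'D_v f x = dotv (gf x) v.

Definition lipschitz_vec (n : nat) (g : 'cV[R]_n -> 'cV[R]_n) (L : R) :=
  forall x y, enorm (g x - g y) <= L * enorm (x - y).

Definition strongly_convex (n : nat) (f : 'cV[R]_n -> R) (mu : R) :=
  forall x y t, 0 <= t <= 1 ->
    f (t *: x + (1 - t) *: y) <=
    t * f x + (1 - t) * f y - mu / 2 * t * (1 - t) * sqn (x - y).

Local Open Scope ereal_scope.

Definition econvex (n : nat) (r : 'cV[R]_n -> \bar R) :=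
  forall x y (t : R), (0 <= t <= 1)%R ->
    r ((t *: x + (1 - t) *: y)%R) <= t%:E * r x + (1 - t)%:E * r y.

Definition eproper (n : nat) (r : 'cV[R]_n -> \bar R) :=
  (forall x, r x != -oo) /\ exists x, r x < +oo.

Definition eclosed (n : nat) (r : 'cV[R]_n -> \bar R) := lower_semicontinuous r.

Definition subdiff (n : nat) (h : 'cV[R]_n -> \bar R) (x g : 'cV[R]_n) : Prop :=
  h x \is a fin_num /\ forall y, h x + (dotv g (y - x))%:E <= h y.

(* dist(0, S) <= e, with dist(0,S) = inf_{s in S} ||s|| (= +oo if S empty) *)
Definition dist0_le (n : nat) (S : 'cV[R]_n -> Prop) (e : R) : Prop :=
  forall d : R, (0 < d)%R -> exists s, S s /\ (enorm s <= e + d)%R.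

Definition Gfun (n : nat) (f : 'cV[R]_n -> R) (r : 'cV[R]_n -> \bar R) x :=
  (f x)%:E + r x.

Definition auglag (n mE mI : nat) (f : 'cV[R]_n -> R) (r : 'cV[R]_n -> \bar R)
  (AE : 'M[R]_(mE, n)) (bE : 'cV[R]_mE) (AI : 'M[R]_(mI, n)) (bI : 'cV[R]_mI)
  (beta : R) (lE : 'cV[R]_mE) (lI : 'cV[R]_mI) (x : 'cV[R]_n) : \bar R :=
  Gfun f r x +
  (dotv lE (AE *m x - bE) + beta / 2 * sqn (AE *m x - bE)
   + (2 * beta)^-1 * (sqn (pospart (beta *: (AI *m x - bI) + lI)) - sqn lI))%:E.

Definition Psi (n mE mI : nat) (f : 'cV[R]_n -> R) (r : 'cV[R]_n -> \bar R)
  (AE : 'M[R]_(mE, n)) (bE : 'cV[R]_mE) (AI : 'M[R]_(mI, n)) (bI : 'cV[R]_mI)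
  (beta : R) (lE : 'cV[R]_mE) (lI : 'cV[R]_mI) (rho : R) (xk : 'cV[R]_n)
  (x : 'cV[R]_n) : \bar R :=
  auglag f r AE bE AI bI beta lE lI x + (rho / 2 * sqn (x - xk))%:E.

Local Close Scope ereal_scope.

Definition beta_k (beta0 sigma : R) (k : nat) : R := beta0 * sigma ^+ k.
Definition rho_k (rho0 sigma : R) (k : nat) : R := rho0 * sigma ^- k.
Definition epsbar (eps beta0 rho0 sigma : R) : R :=
  eps * (sigma - 1) / (8 * (sigma + 1)) * Num.min 1 (Num.sqrt (beta0 * rho0)).
Definition epsbar_k (eps beta0 rho0 sigma : R) (k : nat) : R :=
  Num.min (epsbar eps beta0 rho0 sigma)
          (Num.sqrt (rho0 / (20 * sigma)) * sigma ^- k).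

End Defs.

From mathcomp Require Import all_boot all_order all_algebra.
From mathcomp Require Import all_classical all_reals all_analysis.
From mathcomp Require Import ring lra.
Import Order.TTheory GRing.Theory Num.Theory.
Import numFieldNormedType.Exports.
Local Open Scope ring_scope.

Set Implicit Arguments. Unset Strict Implicit. Unset Printing Implicit Defensive.

(** Measure the iterates by D_k = sqrt (c |x_k - x*|^2 + |lambda_k - lambda*|^2), with
    c = beta_k rho_k = beta0 rho0 constant along the schedule. Psi_k is
    rho_k-strongly convex, so a subgradient g of Psi_k at x_(k+1), compared with x*
    through the KKT conditions and the multiplier updates, gives
    D_(k+1)^2 + 2 beta_k <g, x* - x_(k+1)> <= D_k^2. Cauchy-Schwarz, |g| <= epsbar_k
    and sqrt c |x_(k+1) - x*| <= D_(k+1) turn this into D_(k+1) <= D_k + 2 beta_k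
    epsbar_k / sqrt c, whose right-hand side grows geometrically; summing gives
    D_k <= B_lambda, and B_x = B_lambda / sqrt c. The exact minimizer of Psi_k is the
    case g = 0. *)

Lemma convex_combB (R : nzRingType) (V : lmodType R) (t : R) (x y c : V) :
  t *: x + (1 - t) *: y - c = t *: (x - c) + (1 - t) *: (y - c).
Proof. by rewrite !scalerBr addrACA -opprD -scalerDl subrKC scale1r. Qed.

Section EuclideanInnerProduct.
Variable R : realType.
Implicit Types (m : nat) (a t : R).

Lemma dotvE m (u v : 'cV[R]_m) : dotv u v = (u^T *m v) 0 0.
Proof. by rewrite /dotv !mxE; apply: eq_bigr => i _; rewrite !mxE. Qed.

Lemma dotvC m (u v : 'cV[R]_m) : dotv u v = dotv v u.
Proof. by apply: eq_bigr => i _; rewrite mulrC. Qed.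

Lemma dotvDl m (u w v : 'cV[R]_m) : dotv (u + w) v = dotv u v + dotv w v.
Proof. by rewrite !dotvE linearD mulmxDl mxE. Qed.

Lemma dotvZl m a (u v : 'cV[R]_m) : dotv (a *: u) v = a * dotv u v.
Proof. by rewrite !dotvE linearZ /= -scalemxAl mxE. Qed.

Lemma dotvNl m (u v : 'cV[R]_m) : dotv (- u) v = - dotv u v.
Proof. by rewrite -scaleN1r dotvZl mulN1r. Qed.

Lemma dotvBl m (u w v : 'cV[R]_m) : dotv (u - w) v = dotv u v - dotv w v.
Proof. by rewrite dotvDl dotvNl. Qed.

Lemma dotvDr m (u w v : 'cV[R]_m) : dotv v (u + w) = dotv v u + dotv v w.
Proof. by rewrite dotvC dotvDl !(dotvC v). Qed.

Lemma dotvZr m a (u v : 'cV[R]_m) : dotv v (a *: u) = a * dotv v u.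
Proof. by rewrite dotvC dotvZl dotvC. Qed.

Lemma dotvNr m (u v : 'cV[R]_m) : dotv v (- u) = - dotv v u.
Proof. by rewrite dotvC dotvNl dotvC. Qed.

Lemma dotvBr m (u w v : 'cV[R]_m) : dotv v (u - w) = dotv v u - dotv v w.
Proof. by rewrite dotvDr dotvNr. Qed.

Lemma dotv0r m (u : 'cV[R]_m) : dotv u 0 = 0.
Proof. by rewrite -(scale0r 0) dotvZr mul0r. Qed.

Lemma dotv_trmx m p (A : 'M[R]_(m, p)) (l : 'cV[R]_m) (w : 'cV[R]_p) :
  dotv (A^T *m l) w = dotv l (A *m w).
Proof. by rewrite !dotvE trmx_mul trmxK mulmxA. Qed.

Lemma sqn_ge0 m (u : 'cV[R]_m) : 0 <= sqn u.
Proof. by apply: sumr_ge0 => i _; rewrite -expr2 sqr_ge0. Qed.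

Lemma sqn_eq0 m (u : 'cV[R]_m) : sqn u = 0 -> u = 0.
Proof.
move=> /eqP; rewrite psumr_eq0 => [/allP u0|i _]; last by rewrite -expr2 sqr_ge0.
apply/matrixP => i j; rewrite ord1 mxE.
by have /implyP/(_ isT) := u0 i (mem_index_enum _); rewrite mulf_eq0 orbb => /eqP.
Qed.

Lemma sqnN m (u : 'cV[R]_m) : sqn (- u) = sqn u.
Proof. by rewrite /sqn dotvNl dotvNr opprK. Qed.

Lemma sqnB m (u v : 'cV[R]_m) : sqn (u - v) = sqn (v - u).
Proof. by rewrite -sqnN opprB. Qed.

Lemma sqn_col_mx m1 m2 (u : 'cV[R]_m1) (v : 'cV[R]_m2) :
  sqn (col_mx u v) = sqn u + sqn v.
Proof.
rewrite /sqn /dotv big_split_ord /=.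
by congr (_ + _); apply: eq_bigr => i _; rewrite ?col_mxEu ?col_mxEd.
Qed.

Lemma enorm_ge0 m (u : 'cV[R]_m) : 0 <= enorm u.
Proof. exact: sqrtr_ge0. Qed.

Lemma sqr_enorm m (u : 'cV[R]_m) : enorm u ^+ 2 = sqn u.
Proof. by rewrite sqr_sqrtr // sqn_ge0. Qed.

Lemma sqn_convex_comb m (u v : 'cV[R]_m) t :
  sqn (t *: u + (1 - t) *: v)
  = t * sqn u + (1 - t) * sqn v - t * (1 - t) * sqn (u - v).
Proof.
by rewrite /sqn !(dotvBl, dotvBr, dotvDl, dotvDr, dotvZl, dotvZr) (dotvC v u); ring.
Qed.

Lemma dotv_le_enorm m (u v : 'cV[R]_m) : dotv u v <= enorm u * enorm v.
Proof.
have [u0|] := eqVneq (enorm u) 0.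
  have -> : u = 0 by apply: sqn_eq0; rewrite -sqr_enorm u0 expr0n.
  by rewrite dotvC dotv0r mulr_ge0 ?enorm_ge0.
have [v0|] := eqVneq (enorm v) 0.
  have -> : v = 0 by apply: sqn_eq0; rewrite -sqr_enorm v0 expr0n.
  by rewrite dotv0r mulr_ge0 ?enorm_ge0.
move=> nv0 nu0.
have nu : 0 < enorm u by rewrite lt0r nu0 enorm_ge0.
have nv : 0 < enorm v by rewrite lt0r nv0 enorm_ge0.
have := sqn_ge0 (enorm v *: u - enorm u *: v).
rewrite /sqn !(dotvBl, dotvBr, dotvZl, dotvZr) (dotvC v u).
rewrite -/(sqn u) -/(sqn v) -!sqr_enorm => h.
have : 0 <= enorm u * enorm v * (enorm u * enorm v - dotv u v) by nra.
by rewrite pmulr_rge0 ?mulr_gt0 // subr_ge0.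
Qed.

End EuclideanInnerProduct.

Section StrongConvexity.
Variables (R : realType) (n : nat).
Implicit Types (f g : 'cV[R]_n -> R) (mu nu a : R).

Lemma strongly_convexD f g mu nu : strongly_convex f mu -> strongly_convex g nu ->
  strongly_convex (fun v => f v + g v) (mu + nu).
Proof. by move=> hf hg x y t ht; have := hf x y t ht; have := hg x y t ht; lra. Qed.

Lemma strongly_convex_le f mu nu : nu <= mu -> strongly_convex f mu ->
  strongly_convex f nu.
Proof.
move=> numu hf x y t ht; apply: le_trans (hf x y t ht) _.
have : 0 <= t * (1 - t) * sqn (x - y) by rewrite !mulr_ge0 ?sqn_ge0 //; lra.
nra.
Qed.

Lemma strongly_convex_sqn a (c : 'cV[R]_n) :
  strongly_convex (fun v => a / 2 * sqn (v - c)) a.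
Proof.
move=> x y t _.
rewrite convex_combB sqn_convex_comb opprB addrA subrK; lra.
Qed.

Lemma strongly_convex_dotv (l : 'cV[R]_n) : strongly_convex (dotv l) 0.
Proof. by move=> x y t _; rewrite dotvDr !dotvZr; lra. Qed.

Lemma convex_comp_affine m (F : 'cV[R]_m -> R) (A : 'M[R]_(m, n)) (b : 'cV[R]_m) :
  strongly_convex F 0 -> strongly_convex (fun v => F (A *m v - b)) 0.
Proof.
move=> hF x y t ht; rewrite mulmxDr -!scalemxAr (convex_combB t (A *m x)).
by have := hF (A *m x - b) (A *m y - b) t ht; rewrite !mul0r !subr0.
Qed.

End StrongConvexity.

Lemma sqr_max0_convex (R : realFieldType) (a b t : R) : 0 <= t <= 1 ->
  Num.max (t * a + (1 - t) * b) 0 ^+ 2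
  <= t * Num.max a 0 ^+ 2 + (1 - t) * Num.max b 0 ^+ 2.
Proof.
move=> /andP[t0 t1].
have [a1 a2] : a <= Num.max a 0 /\ 0 <= Num.max a 0 by rewrite !le_max !lexx orbT.
have [b1 b2] : b <= Num.max b 0 /\ 0 <= Num.max b 0 by rewrite !le_max !lexx orbT.
have comb : Num.max (t * a + (1 - t) * b) 0 <= t * Num.max a 0 + (1 - t) * Num.max b 0.
  rewrite ge_max; apply/andP; split; last by rewrite addr_ge0 ?mulr_ge0 ?subr_ge0.
  by rewrite lerD ?ler_wpM2l ?subr_ge0.
apply: le_trans (_ : (t * Num.max a 0 + (1 - t) * Num.max b 0) ^+ 2 <= _).
  by rewrite !expr2 ler_pM ?le_max ?lexx ?orbT.
have : 0 <= t * (1 - t) * (Num.max a 0 - Num.max b 0) ^+ 2.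
  by rewrite mulr_ge0 ?sqr_ge0 ?mulr_ge0 ?subr_ge0.
nra.
Qed.

Section Penalties.
Variables (R : realType) (beta : R).
Hypothesis beta_gt0 : 0 < beta.
Implicit Types (m : nat).

Definition penaltyE m (l u : 'cV[R]_m) := dotv l u + beta / 2 * sqn u.

Definition penaltyI m (l v : 'cV[R]_m) :=
  (2 * beta)^-1 * (sqn (pospart (beta *: v + l)) - sqn l).

Lemma penaltyE_convex m (l : 'cV[R]_m) : strongly_convex (penaltyE l) 0.
Proof.
apply: (strongly_convex_le (ltW beta_gt0)) => x y t ht.
have := strongly_convexD (strongly_convex_dotv l) (strongly_convex_sqn beta 0) x y ht.
by rewrite /penaltyE !subr0 add0r.
Qed.

Lemma sqn_pospart_convex m : strongly_convex (fun v : 'cV[R]_m => sqn (pospart v)) 0.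
Proof.
move=> x y t ht; rewrite !mul0r subr0 /sqn /dotv !mulr_sumr -big_split /=.
apply: ler_sum => i _; rewrite !mxE -!expr2; exact: sqr_max0_convex.
Qed.

Lemma penaltyI_convex m (l : 'cV[R]_m) : strongly_convex (penaltyI l) 0.
Proof.
move=> x y t ht; rewrite !mul0r subr0 /penaltyI.
have -> : beta *: (t *: x + (1 - t) *: y) + l
    = t *: (beta *: x + l) + (1 - t) *: (beta *: y + l).
  by apply/matrixP => i j; rewrite !mxE; ring.
have := sqn_pospart_convex (beta *: x + l) (beta *: y + l) ht.
rewrite !mul0r subr0 => h.
have hb : 0 < (2 * beta)^-1 by rewrite invr_gt0 mulr_gt0.
nra.
Qed.

Lemma penaltyE0 m (l : 'cV[R]_m) : penaltyE l 0 = 0.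
Proof. by rewrite /penaltyE /sqn !dotv0r mulr0 addr0. Qed.

Lemma penaltyI_le0 m (l v : 'cV[R]_m) : (forall i, v i 0 <= 0) -> penaltyI l v <= 0.
Proof.
move=> v_le0; rewrite /penaltyI pmulr_rle0 ?invr_gt0 ?mulr_gt0 // subr_le0.
apply: ler_sum => i _; rewrite !mxE maxEle.
have vi := v_le0 i; case: (leP (beta * v i 0 + l i 0) 0) => [_|lt0].
  by rewrite mul0r -expr2 sqr_ge0.
have : beta * v i 0 <= 0 by rewrite pmulr_rle0.
nra.
Qed.

Lemma penaltyE_update m (l ls u : 'cV[R]_m) :
  sqn (l + beta *: u - ls) - sqn (l - ls) = 2 * beta * (penaltyE l u - dotv ls u).
Proof.
rewrite addrAC /penaltyE /sqn.
rewrite !(dotvDl, dotvDr, dotvNl, dotvNr, dotvZl, dotvZr) (dotvC ls l) (dotvC u ls) (dotvC u l).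
by field.
Qed.

Lemma penaltyI_update m (l ls v : 'cV[R]_m) : (forall i, 0 <= ls i 0) ->
  sqn (pospart (l + beta *: v) - ls) - sqn (l - ls)
  <= 2 * beta * (penaltyI l v - dotv ls v).
Proof.
move=> ls_ge0; rewrite /penaltyI mulrBr mulrA divff ?mul1r ?mulf_neq0 ?gt_eqF //.
rewrite /sqn /dotv !mulr_sumr -!sumrB; apply: ler_sum => i _; rewrite !mxE.
have := ls_ge0 i; set a := l i 0; set w := v i 0; set c := ls i 0 => c_ge0.
rewrite (addrC (beta * w)).
have [p1 p2] : a + beta * w <= Num.max (a + beta * w) 0 /\ 0 <= Num.max (a + beta * w) 0.
  by rewrite !le_max !lexx orbT.
have p3 : Num.max (a + beta * w) 0 * (Num.max (a + beta * w) 0 - (a + beta * w)) = 0.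
  by case: leP => h; rewrite ?mul0r // subrr mulr0.
nra.
Qed.

End Penalties.

Lemma le0_of_forall_scaled (R : realFieldType) (u v : R) :
  (forall t, 0 < t <= 1 -> u <= t * v) -> u <= 0.
Proof.
move=> uv; have [v_le0|v_gt0] := leP v 0.
  by apply: le_trans (uv 1 _) _; rewrite ?mul1r ?ltr01 ?lexx.
apply/ler_addgt0Pr => e e_gt0; rewrite add0r.
have t_gt0 : 0 < Num.min 1 (e / v) by rewrite lt_min ltr01 divr_gt0.
apply: le_trans (uv (Num.min 1 (e / v)) _) _; first by rewrite t_gt0 ge_min lexx.
by rewrite -ler_pdivlMr // ge_min lexx orbT.
Qed.

Lemma subdiff_strongly_convex (R : realType) n (r : 'cV[R]_n -> \bar R)
    (Q : 'cV[R]_n -> R) (rho : R) (y z g : 'cV[R]_n) :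
  econvex r -> strongly_convex Q rho -> r z \is a fin_num ->
  subdiff (fun v => r v + (Q v)%:E)%E y g ->
  (r y + (Q y + dotv g (z - y) + rho / 2 * sqn (z - y))%:E <= r z + (Q z)%:E)%E.
Proof.
(* Test the subgradient inequality at y + t (z - y), bound the right-hand side by
   convexity, divide by t and let t -> 0. *)
move=> r_cvx Q_cvx rz [+ sub]; rewrite fin_numD => /andP[ry _].
rewrite -(fineK ry) -(fineK rz) -!EFinD lee_fin -subr_le0.
apply: (@le0_of_forall_scaled _ _ (rho / 2 * sqn (z - y))) => t t01.
have t01' : 0 <= t <= 1 by case/andP: t01 => /ltW -> ->.
have := sub (t *: z + (1 - t) *: y).
rewrite (_ : t *: z + (1 - t) *: y - y = t *: (z - y)); last first.
  by rewrite scalerBr addrAC scalerBl scale1r addrA subrK addrC.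
move=> /le_trans /(_ (leeD2r _ (r_cvx z y t t01'))).
rewrite -(fineK ry) -(fineK rz) -!EFinM -!EFinD lee_fin dotvZr.
have := Q_cvx z y t t01'; case/andP: t01 => t_gt0 _.
move=> Qw H; rewrite -(ler_pM2l t_gt0); nra.
Qed.

Lemma sqr_recursion_le (R : realFieldType) (D D' b : R) : 0 <= D -> 0 <= D' -> 0 <= b ->
  D' ^+ 2 <= D ^+ 2 + 2 * b * D' -> D' <= D + 2 * b.
Proof. move=> D_ge0 D'_ge0 b_ge0 rec; nra. Qed.

Section IpalmStep.
Variables (R : realType) (n mE mI : nat) (f : 'cV[R]_n -> R) (mu : R)
  (r : 'cV[R]_n -> \bar R)
  (AE : 'M[R]_(mE, n)) (bE : 'cV[R]_mE) (AI : 'M[R]_(mI, n)) (bI : 'cV[R]_mI)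
  (xs : 'cV[R]_n) (lEs : 'cV[R]_mE) (lIs : 'cV[R]_mI).
Hypotheses (mu_ge0 : 0 <= mu) (f_cvx : strongly_convex f mu) (r_cvx : econvex r)
  (kkt_stat : subdiff (Gfun f r) xs (- (AE^T *m lEs + AI^T *m lIs)))
  (kkt_eq : AE *m xs = bE) (kkt_ineq : forall i, (AI *m xs) i 0 <= bI i 0)
  (kkt_lIs_ge0 : forall i, 0 <= lIs i 0) (kkt_compl : dotv lIs (AI *m xs - bI) = 0).

Definition Psi_smooth beta (lE : 'cV[R]_mE) (lI : 'cV[R]_mI) rho xk v :=
  f v + penaltyE beta lE (AE *m v - bE) + penaltyI beta lI (AI *m v - bI)
  + rho / 2 * sqn (v - xk).

Lemma PsiE beta lE lI rho xk :
  Psi f r AE bE AI bI beta lE lI rho xk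
  = fun v => (r v + (Psi_smooth beta lE lI rho xk v)%:E)%E.
Proof.
apply/funext => v; rewrite /Psi /auglag /Gfun /Psi_smooth /penaltyE /penaltyI.
by rewrite (addeC (f v)%:E) -!addeA -!EFinD; congr (_ + _%:E)%E; ring.
Qed.

Lemma Psi_smooth_convex beta lE lI rho xk : 0 < beta ->
  strongly_convex (Psi_smooth beta lE lI rho xk) rho.
Proof.
move=> beta_gt0 x y t t01.
have f0 := strongly_convex_le mu_ge0 f_cvx.
have pE := convex_comp_affine AE bE (penaltyE_convex beta_gt0 lE).
have pI := convex_comp_affine AI bI (penaltyI_convex beta_gt0 lI).
have := strongly_convexD (strongly_convexD (strongly_convexD f0 pE) pI)
          (strongly_convex_sqn rho xk) x y t01.
by rewrite !add0r.
Qed.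

Lemma kkt_lagrangian_min y :
  (Gfun f r xs <= Gfun f r y + (dotv lEs (AE *m y - bE) + dotv lIs (AI *m y - bI))%:E)%E.
Proof.
have lagr : dotv (- (AE^T *m lEs + AI^T *m lIs)) (y - xs)
    = - (dotv lEs (AE *m y - bE) + dotv lIs (AI *m y - bI)).
  rewrite dotvNl dotvDl !dotv_trmx !mulmxBr kkt_eq.
  by rewrite -(subrKA bI) dotvDr -(opprB (AI *m xs)) dotvBr kkt_compl subr0.
by case: kkt_stat => _ /(_ y); rewrite lagr EFinN leeBlDr.
Qed.

Definition kkt_dist2 c x (lE : 'cV[R]_mE) (lI : 'cV[R]_mI) :=
  c * sqn (x - xs) + sqn (col_mx (lE - lEs) (lI - lIs)).

Lemma kkt_dist2_subgrad_step beta rho lE lI xk y g : 0 < beta -> 0 <= rho ->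
  subdiff (Psi f r AE bE AI bI beta lE lI rho xk) y g ->
  2 * beta * dotv g (xs - y)
  + kkt_dist2 (beta * rho) y (lE + beta *: (AE *m y - bE))
      (pospart (lI + beta *: (AI *m y - bI)))
  <= kkt_dist2 (beta * rho) xk lE lI.
Proof.
move=> beta_gt0 rho_ge0; rewrite PsiE => sub.
have rxs : r xs \is a fin_num by case: kkt_stat; rewrite fin_numD => /andP[].
have ry : r y \is a fin_num by case: sub; rewrite fin_numD => /andP[].
have := subdiff_strongly_convex r_cvx (Psi_smooth_convex lE lI rho xk beta_gt0) rxs sub.
have := kkt_lagrangian_min y; rewrite /Gfun.
rewrite -(fineK ry) -(fineK rxs) -!EFinD !lee_fin => lagr descent.
have smooth_xs : Psi_smooth beta lE lI rho xk xs <= f xs + rho / 2 * sqn (xs - xk).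
  rewrite /Psi_smooth kkt_eq subrr penaltyE0 addr0 lerD2r gerDl.
  by apply: (penaltyI_le0 beta_gt0) => i; move: (kkt_ineq i); rewrite -subr_le0 !mxE.
have smooth_y : f y + penaltyE beta lE (AE *m y - bE) + penaltyI beta lI (AI *m y - bI)
    <= Psi_smooth beta lE lI rho xk y.
  by rewrite lerDl mulr_ge0 ?sqn_ge0 ?divr_ge0.
have := penaltyE_update beta lE lEs (AE *m y - bE).
have := penaltyI_update beta_gt0 lI (AI *m y - bI) kkt_lIs_ge0.
rewrite /kkt_dist2 !sqn_col_mx (sqnB y) (sqnB xk) => updI updE.
have : dotv g (xs - y) + rho / 2 * sqn (xs - y)
    + (penaltyE beta lE (AE *m y - bE) - dotv lEs (AE *m y - bE))
    + (penaltyI beta lI (AI *m y - bI) - dotv lIs (AI *m y - bI))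
    <= rho / 2 * sqn (xs - xk) by lra.
have beta2_ge0 : 0 <= 2 * beta by rewrite mulr_ge0 // ltW.
move=> /(ler_wpM2l beta2_ge0); lra.
Qed.

Lemma kkt_dist2_ge0 c x lE lI : 0 <= c -> 0 <= kkt_dist2 c x lE lI.
Proof. by move=> c_ge0; rewrite addr_ge0 ?mulr_ge0 ?sqn_ge0. Qed.

Lemma kkt_dist2_ge_primal c x lE lI : 0 <= c ->
  Num.sqrt c * enorm (x - xs) <= Num.sqrt (kkt_dist2 c x lE lI).
Proof.
by move=> c_ge0; rewrite -sqrtrM // ler_sqrt ?kkt_dist2_ge0 // lerDl sqn_ge0.
Qed.

Lemma kkt_dist2_ge_dual c x lE lI : 0 <= c ->
  enorm (col_mx (lE - lEs) (lI - lIs)) <= Num.sqrt (kkt_dist2 c x lE lI).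
Proof.
by move=> c_ge0; rewrite ler_sqrt ?kkt_dist2_ge0 // lerDr mulr_ge0 ?sqn_ge0.
Qed.

Lemma kkt_dist2_inexact_step beta rho lE lI xk y e : 0 < beta -> 0 < rho ->
  dist0_le (subdiff (Psi f r AE bE AI bI beta lE lI rho xk) y) e ->
  Num.sqrt (kkt_dist2 (beta * rho) y (lE + beta *: (AE *m y - bE))
              (pospart (lI + beta *: (AI *m y - bI))))
  <= Num.sqrt (kkt_dist2 (beta * rho) xk lE lI)
     + 2 * beta * e / Num.sqrt (beta * rho).
Proof.
move=> beta_gt0 rho_gt0 inexact.
have c_gt0 : 0 < beta * rho by rewrite mulr_gt0.
set s := Num.sqrt (beta * rho); have s_gt0 : 0 < s by rewrite sqrtr_gt0.
set P' := kkt_dist2 _ y _ _; set P := kkt_dist2 _ xk _ _.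
have P'_ge0 : 0 <= P' by apply: kkt_dist2_ge0; exact: ltW.
have P_ge0 : 0 <= P by apply: kkt_dist2_ge0; exact: ltW.
apply/ler_addgt0Pr => eta eta_gt0.
set d := eta * s / (2 * beta).
have [|g [sub g_le]] := inexact d; first by rewrite !(mulr_gt0, divr_gt0, invr_gt0).
have step : 2 * beta * dotv g (xs - y) + P' <= P := kkt_dist2_subgrad_step beta_gt0 (ltW rho_gt0) sub.
have ed_ge0 : 0 <= e + d by apply: le_trans g_le; exact: enorm_ge0.
have near : s * enorm (y - xs) <= Num.sqrt P' by apply: kkt_dist2_ge_primal; exact: ltW.
have cs : - dotv g (xs - y) <= (e + d) * (Num.sqrt P' / s).
  rewrite -dotvNr opprB; apply: le_trans (dotv_le_enorm _ _) _.
  by rewrite ler_pM ?enorm_ge0 // ler_pdivlMr // mulrC.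
have b_ge0 : 0 <= beta * (e + d) / s by rewrite divr_ge0 ?mulr_ge0 // ltW.
apply: le_trans (sqr_recursion_le (sqrtr_ge0 P) (sqrtr_ge0 P') b_ge0 _) _.
  rewrite (sqr_sqrtr P_ge0) (sqr_sqrtr P'_ge0).
  have -> : 2 * (beta * (e + d) / s) * Num.sqrt P'
      = 2 * beta * ((e + d) * (Num.sqrt P' / s)) by ring.
  have beta2_ge0 : 0 <= 2 * beta by rewrite mulr_ge0 // ltW.
  by move: cs => /(ler_wpM2l beta2_ge0); lra.
have -> : 2 * (beta * (e + d) / s) = 2 * beta * e / s + eta.
  by rewrite /d; field; rewrite !gt_eqF.
by rewrite addrA.
Qed.

Lemma kkt_dist2_argmin_step beta rho lE lI xk z w : 0 < beta -> 0 <= rho ->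
  (forall v, r v != -oo)%E ->
  Psi f r AE bE AI bI beta lE lI rho xk w \is a fin_num ->
  (forall v, Psi f r AE bE AI bI beta lE lI rho xk z
             <= Psi f r AE bE AI bI beta lE lI rho xk v)%E ->
  kkt_dist2 (beta * rho) z (lE + beta *: (AE *m z - bE))
    (pospart (lI + beta *: (AI *m z - bI)))
  <= kkt_dist2 (beta * rho) xk lE lI.
Proof.
move=> beta_gt0 rho_ge0 r_notNy w_fin z_min.
have z_fin : Psi f r AE bE AI bI beta lE lI rho xk z \is a fin_num.
  move: (z_min w) w_fin; rewrite PsiE /=.
  case: (r z) (r_notNy z) => [a _ _ _ //| _ |//].
  by rewrite addye // leye_eq => /eqP ->.
have := @kkt_dist2_subgrad_step beta rho lE lI xk z 0 beta_gt0 rho_ge0.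
rewrite dotvC dotv0r mulr0 add0r; apply; split => // v.
by rewrite dotvC dotv0r adde0.
Qed.

End IpalmStep.

Lemma geometric_drift (R : realFieldType) (D : nat -> R) (a sigma : R) : sigma != 1 ->
  (forall k, D k.+1 <= D k + a * sigma ^+ k) ->
  forall k, D k <= D 0%N + a * (sigma ^+ k - 1) / (sigma - 1).
Proof.
move=> sigma_neq1 drift; elim=> [|k IH]; first by rewrite expr0 subrr mulr0 mul0r addr0.
apply: le_trans (drift k) _.
have -> : D 0%N + a * (sigma ^+ k.+1 - 1) / (sigma - 1)
    = D 0%N + a * (sigma ^+ k - 1) / (sigma - 1) + a * sigma ^+ k.
  by rewrite exprS; field; rewrite subr_eq0.
by rewrite lerD2r.
Qed.

Section Schedule.
Variables (R : realType) (beta0 rho0 sigma : R).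
Hypotheses (beta0_gt0 : 0 < beta0) (rho0_gt0 : 0 < rho0) (sigma_gt1 : 1 < sigma).

Lemma beta_k_gt0 k : 0 < beta_k beta0 sigma k.
Proof. by rewrite mulr_gt0 // exprn_gt0 // (lt_trans ltr01). Qed.

Lemma rho_k_gt0 k : 0 < rho_k rho0 sigma k.
Proof. by rewrite mulr_gt0 // invr_gt0 exprn_gt0 // (lt_trans ltr01). Qed.

Lemma beta_k_rho_k k : beta_k beta0 sigma k * rho_k rho0 sigma k = beta0 * rho0.
Proof. by rewrite /beta_k /rho_k; field; rewrite expf_neq0 // gt_eqF // (lt_trans ltr01). Qed.

Lemma epsbar_ge0 eps : 0 <= eps -> 0 <= epsbar eps beta0 rho0 sigma.
Proof.
move=> eps_ge0; rewrite /epsbar; have s1 : 0 <= sigma - 1 by rewrite subr_ge0 ltW.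
have s2 : 0 <= 8 * (sigma + 1) by rewrite mulr_ge0 // addr_ge0 // ltW // (lt_trans ltr01).
apply: mulr_ge0; first by rewrite divr_ge0 // mulr_ge0.
by rewrite le_min ler01 sqrtr_ge0.
Qed.

Lemma epsbar_k_le eps k : epsbar_k eps beta0 rho0 sigma k <= epsbar eps beta0 rho0 sigma.
Proof. by rewrite /epsbar_k ge_min lexx. Qed.

Lemma drift_coef_le eps k :
  2 * beta_k beta0 sigma k * epsbar_k eps beta0 rho0 sigma k / Num.sqrt (beta0 * rho0)
  <= 2 * beta0 * epsbar eps beta0 rho0 sigma / Num.sqrt (beta0 * rho0) * sigma ^+ k.
Proof.
have bk2_gt0 : 0 < 2 * beta_k beta0 sigma k by rewrite mulr_gt0 // beta_k_gt0.
rewrite [X in _ <= X](_ : _ = 2 * beta_k beta0 sigma k * epsbar eps beta0 rho0 sigma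
  / Num.sqrt (beta0 * rho0)); last by rewrite /beta_k; ring.
by rewrite ler_pM2r ?invr_gt0 ?sqrtr_gt0 ?mulr_gt0 // ler_pM2l // epsbar_k_le.
Qed.

Lemma drift_bound eb D0 K k : 0 <= eb -> (k <= K)%N ->
  D0 + 2 * beta0 * eb / Num.sqrt (beta0 * rho0) * (sigma ^+ k - 1) / (sigma - 1)
  <= 2 * eb * Num.sqrt beta0 * (sigma ^+ K - 1) / (Num.sqrt rho0 * (sigma - 1)) + D0.
Proof.
move=> eb_ge0 kK; rewrite addrC lerD2r.
have sb_gt0 : 0 < Num.sqrt beta0 by rewrite sqrtr_gt0.
have sr_gt0 : 0 < Num.sqrt rho0 by rewrite sqrtr_gt0.
have -> : 2 * beta0 * eb / Num.sqrt (beta0 * rho0)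
    = 2 * eb * Num.sqrt beta0 / Num.sqrt rho0.
  rewrite sqrtrM ?ltW // -{1}(sqr_sqrtr (ltW beta0_gt0)).
  by field; rewrite !gt_eqF.
rewrite [X in _ <= X](_ : _ = 2 * eb * Num.sqrt beta0 / Num.sqrt rho0
    * (sigma ^+ K - 1) / (sigma - 1)); last by rewrite invfM; ring.
have sigma1_gt0 : 0 < sigma - 1 by rewrite subr_gt0.
rewrite ler_pM2r ?invr_gt0 // ler_wpM2l ?divr_ge0 ?mulr_ge0 ?sqrtr_ge0 //.
by rewrite lerD2r ler_eXn2l.
Qed.

Lemma primal_bound_eq eb D0 K :
  2 * eb * (sigma ^+ K - 1) / (rho0 * (sigma - 1)) + D0 / Num.sqrt (beta0 * rho0)
  = (2 * eb * Num.sqrt beta0 * (sigma ^+ K - 1) / (Num.sqrt rho0 * (sigma - 1)) + D0)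
    / Num.sqrt (beta0 * rho0).
Proof.
have sb_gt0 : 0 < Num.sqrt beta0 by rewrite sqrtr_gt0.
have sr_gt0 : 0 < Num.sqrt rho0 by rewrite sqrtr_gt0.
rewrite sqrtrM ?ltW // -{1}(sqr_sqrtr (ltW rho0_gt0)).
by field; rewrite !gt_eqF // subr_gt0.
Qed.

End Schedule.

Unset Implicit Arguments. Set Strict Implicit. Set Printing Implicit Defensive.

Theorem lemma5p6 (R : realType) (n mE mI : nat)
  (f : 'cV[R]_n -> R) (gf : 'cV[R]_n -> 'cV[R]_n) (Lf mu : R)
  (r : 'cV[R]_n -> \bar R)
  (AE : 'M[R]_(mE, n)) (bE : 'cV[R]_mE) (AI : 'M[R]_(mI, n)) (bI : 'cV[R]_mI)
  (xs : 'cV[R]_n) (lEs : 'cV[R]_mE) (lIs : 'cV[R]_mI)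
  (eps beta0 rho0 sigma : R) (K : nat)
  (x : nat -> 'cV[R]_n) (lE : nat -> 'cV[R]_mE) (lI : nat -> 'cV[R]_mI) :
  (* standing assumptions on f and r *)
  has_gradient f gf -> lipschitz_vec gf Lf -> 0 <= mu -> strongly_convex f mu ->
  econvex r -> eproper r -> eclosed r ->
  (* KKT point (xs, lEs, lIs) *)
  subdiff (Gfun f r) xs (- (AE^T *m lEs + AI^T *m lIs)) ->
  AE *m xs = bE ->
  (forall i, (AI *m xs) i 0 <= bI i 0) ->
  (forall i, 0 <= lIs i 0) ->
  dotv lIs (AI *m xs - bI) = 0 ->
  (* parameters *)
  0 < eps < 1 -> 0 < beta0 -> 0 < rho0 -> 1 < sigma -> (1 <= K)%N ->
  (* iPALM iterates *)
  (Gfun f r (x 0%N) < +oo)%E ->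
  (forall k : nat,
     dist0_le
       (subdiff (Psi f r AE bE AI bI (beta_k beta0 sigma k) (lE k) (lI k)
                     (rho_k rho0 sigma k) (x k)) (x k.+1))
       (epsbar_k eps beta0 rho0 sigma k)
     /\ lE k.+1 = lE k + beta_k beta0 sigma k *: (AE *m x k.+1 - bE)
     /\ lI k.+1 = pospart (lI k + beta_k beta0 sigma k *: (AI *m x k.+1 - bI))) ->
  let D0 := Num.sqrt (beta0 * rho0 * sqn (x 0%N - xs)
                      + sqn (col_mx (lE 0%N - lEs) (lI 0%N - lIs))) in
  let eb := epsbar eps beta0 rho0 sigma in
  let Bx := 2 * eb * (sigma ^+ K - 1) / (rho0 * (sigma - 1))
            + D0 / Num.sqrt (beta0 * rho0) in
  let Bl := 2 * eb * Num.sqrt beta0 * (sigma ^+ K - 1)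
              / (Num.sqrt rho0 * (sigma - 1)) + D0 in
  (forall k : nat, (k <= K)%N ->
     enorm (x k - xs) <= Bx
     /\ enorm (col_mx (lE k - lEs) (lI k - lIs)) <= Bl)
  /\
  (forall k : nat, (k < K)%N -> forall z : 'cV[R]_n,
     (forall y, (Psi f r AE bE AI bI (beta_k beta0 sigma k) (lE k) (lI k)
                     (rho_k rho0 sigma k) (x k) z
              <= Psi f r AE bE AI bI (beta_k beta0 sigma k) (lE k) (lI k)
                     (rho_k rho0 sigma k) (x k) y)%E) ->
     enorm (z - xs) <= Bx).
Proof.
move=> _ _ mu_ge0 f_cvx r_cvx [r_notNy _] _ kkt_stat kkt_eq kkt_ineq kkt_lIs kkt_compl
  /andP[eps_gt0 _] beta0_gt0 rho0_gt0 sigma_gt1 _ _ iter D0 eb Bx Bl.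
pose s := Num.sqrt (beta0 * rho0).
have s_gt0 : 0 < s by rewrite sqrtr_gt0 mulr_gt0.
pose D k := Num.sqrt (kkt_dist2 xs lEs lIs (beta0 * rho0) (x k) (lE k) (lI k)).
have drift k : D k.+1 <= D k + 2 * beta0 * eb / s * sigma ^+ k.
  rewrite /D; have [inexact [-> ->]] := iter k.
  have := kkt_dist2_inexact_step mu_ge0 f_cvx r_cvx kkt_stat kkt_eq kkt_ineq kkt_lIs
    kkt_compl (beta_k_gt0 beta0_gt0 sigma_gt1 k) (rho_k_gt0 rho0_gt0 sigma_gt1 k) inexact.
  rewrite beta_k_rho_k // => /le_trans; apply; rewrite lerD2l.
  exact: drift_coef_le.
have eb_ge0 : 0 <= eb by apply: epsbar_ge0 => //; exact: ltW.
have bound k : (k <= K)%N -> D k <= Bl.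
  move=> kK; apply: le_trans (geometric_drift _ drift k) _; first by rewrite gt_eqF.
  exact: drift_bound.
have primal k v : (k <= K)%N -> s * enorm (v - xs) <= D k -> enorm (v - xs) <= Bx.
  move=> kK near; rewrite /Bx primal_bound_eq // -/s ler_pdivlMr // mulrC.
  exact: le_trans near (bound k kK).
have c_ge0 : 0 <= beta0 * rho0 by rewrite mulr_ge0 ?ltW.
split=> [k kK|k kK z z_min].
  split; last by apply: le_trans (bound k kK); exact: kkt_dist2_ge_dual.
  by apply: (primal k) => //; exact: kkt_dist2_ge_primal.
have [inexact _] := iter k.
have [|g [[w_fin _] _]] := inexact 1; first exact: ltr01.
have := kkt_dist2_argmin_step mu_ge0 f_cvx r_cvx kkt_stat kkt_eq kkt_ineq kkt_lIs kkt_compl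
  (beta_k_gt0 beta0_gt0 sigma_gt1 k) (ltW (rho_k_gt0 rho0_gt0 sigma_gt1 k)) r_notNy w_fin z_min.
rewrite beta_k_rho_k // => dist_le.
apply: (primal k) (ltnW kK) _; apply: le_trans (kkt_dist2_ge_primal _ _ _ _ _ _ c_ge0) _.
by rewrite /D ler_sqrt; [exact: dist_le | exact: kkt_dist2_ge0].
Qed.
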